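(* Let $1\le n\le N-1$ and $Z_n=\frac1n\sum_{t=1}^n (X_t-\mu)$. For every $\lambda>0$, \[ \log \mathbb E \exp(\lambda n Z_n)\le \frac{(b-a)^2}{8}\,\lambda^2 (n+1)\Big(1-\frac nN\Big). \]
   Context: Let $N\ge 2$ and let $\mathcal X=(x_1,\dots,x_N)$ be a finite population of real numbers (repetitions allowed). Let $(X_1,\dots,X_N)=(x_{\pi(1)},\dots,x_{\pi(N)})$, where $\pi$ is a uniformly random permutation of $\{1,\dots,N\}$. For $n\le N$, $(X_1,\dots,X_n)$ is therefore a sample of size $n$ drawn uniformly without replacement from $\mathcal X$. Let $\mu=\frac1N\sum_{i=1}^N x_i$, $a=\min_i x_i$ and $b=\max_i x_i$. *)

From HB Require Import structures.
From mathcomp Require Import all_boot all_fingroup.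
From Stdlib Require Import Reals.
Set Implicit Arguments.
Unset Strict Implicit.
Unset Printing Implicit Defensive.
Open Scope R_scope.

Definition pop_mean (N : nat) (x : 'I_N -> R) : R :=
  (\big[Rplus/0]_(i < N) x i) / INR N.

(* n * Z_n = sum_{t=1}^n (X_t - mu), with X_t = x_{pi(t)}; indices shifted to 0..n-1 *)
Definition nZ (N n : nat) (x : 'I_N -> R) (s : 'S_N) : R :=
  \big[Rplus/0]_(t < N | ltn t n) (x (s t) - pop_mean x).

Definition Eperm (N : nat) (f : 'S_N -> R) : R :=
  (\big[Rplus/0]_(s : 'S_N) f s) / INR #|{perm 'I_N}|.

(* Write S_k(s) = sum_{t<k} (x_{s t} - mu) for the centred sum of the first k
   draws of a permutation s, and M_k = sum_s exp(lambda * n * S_k(s) / k) for the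
   (unnormalised) moment generating function of lambda * n times the mean of
   the first k draws.  The proof runs the "reverse martingale" argument:

   - Removing a uniformly chosen element from the first k+1 draws gives the
     first k draws of a uniform permutation (reindexing by transpositions).
     Conditionally on the first k+1 draws, the removed element has zero-mean
     increment of range (b-a)/k, so the finite Hoeffding lemma yields
       M_k <= M_{k+1} * exp(lambda^2 (b-a)^2/8 * n^2/k^2).
   - At k = N the centred sum vanishes, so M_N = N!.
   - Iterating from k = n up to N and using n^2/k^2 <= n(n+1)(1/k - 1/(k+1)),
     the exponents telescope to lambda^2 (b-a)^2/8 * (n+1) * (1 - n/N). *)

From HB Require Import structures.
From mathcomp Require Import all_boot all_fingroup.
From Stdlib Require Import Reals Lra Psatz.
From Coquelicot Require Import Coquelicot.
From mathcomp Require Import zify.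
Open Scope R_scope.

Lemma exp_le x y : x <= y -> exp x <= exp y.
Proof. move=> [H|->]; [left; exact: exp_increasing | lra]. Qed.

Lemma ln_le u v : 0 < u -> u <= v -> ln u <= ln v.
Proof. move=> hu [h|->]; [left; exact: ln_increasing | lra]. Qed.

Lemma Rplus_associative : associative Rplus.
Proof. by move=> *; ring. Qed.

HB.instance Definition _ :=
  Monoid.isComLaw.Build R 0 Rplus Rplus_associative Rplus_comm Rplus_0_l.

Section RealSums.
Variable I : finType.
Implicit Types (P : pred I) (F G : I -> R).

Lemma sumR_le P F G : (forall i, P i -> F i <= G i) ->
  \big[Rplus/0]_(i | P i) F i <= \big[Rplus/0]_(i | P i) G i.
Proof.
  by move=> H; apply: (big_ind2 (fun u v => u <= v)); [lra | move=> *; lra |].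
Qed.

Lemma sumR_ge0 P F : (forall i, P i -> 0 <= F i) -> 0 <= \big[Rplus/0]_(i | P i) F i.
Proof. by move=> H; apply: (big_ind (fun u => 0 <= u)); [lra | move=> *; lra |]. Qed.

Lemma sumR_gt0 P F i0 : P i0 -> (forall i, P i -> 0 <= F i) -> 0 < F i0 ->
  0 < \big[Rplus/0]_(i | P i) F i.
Proof.
  move=> Pi0 H H0; rewrite (bigD1 i0) //=.
  have : 0 <= \big[Rplus/0]_(i | P i && (i != i0)) F i.
    by apply: sumR_ge0 => i /andP [Pi _]; apply: H.
  lra.
Qed.

Lemma sumR_mull P F c :
  c * \big[Rplus/0]_(i | P i) F i = \big[Rplus/0]_(i | P i) (c * F i).
Proof.
  by apply: (big_ind2 (fun u v => c * u = v)); [ring | move=> ? ? ? ? <- <-; ring |].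
Qed.

Lemma sumR_add P F G : \big[Rplus/0]_(i | P i) (F i + G i) =
  \big[Rplus/0]_(i | P i) F i + \big[Rplus/0]_(i | P i) G i.
Proof. exact: big_split. Qed.

Lemma sumR_const c : \big[Rplus/0]_(i : I) c = INR #|I| * c.
Proof.
  rewrite big_const; elim: #|I| => [|m IH]; first by rewrite /=; ring.
  by rewrite iterS IH S_INR; ring.
Qed.
End RealSums.

Lemma sumR_const_prefix (N m : nat) (c : R) : leq m N ->
  \big[Rplus/0]_(j < N | ltn j m) c = INR m * c.
Proof.
  elim: m => [|m IH] Hm; first by rewrite big_pred0 /=; [ring | move=> j].
  rewrite S_INR (bigD1 (Ordinal Hm)) /=; last by rewrite ltnS.
  rewrite (eq_bigl (fun j : 'I_N => ltn j m)); last first.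
    by move=> j /=; rewrite ltnS -val_eqE /= ltn_neqAle andbC.
  by rewrite IH; [ring | exact: ltnW].
Qed.

Lemma nonneg_of_convex_critical {g g1 g2 : R -> R} :
  (forall c, derivable_pt_lim g c (g1 c)) ->
  (forall c, derivable_pt_lim g1 c (g2 c)) ->
  (forall c, 0 <= g2 c) -> g 0 = 0 -> g1 0 = 0 -> forall u, 0 <= g u.
Proof.
  move=> Hg Hg1 Hg2 g0 g10 u.
  case: (Rtotal_order u 0) => [Hu|[->|Hu]].
  - have [c [Ec Hc]] := MVT_cor2 g g1 u 0 Hu (fun c _ => Hg c).
    have [d [Ed Hd]] := MVT_cor2 g1 g2 c 0 (proj2 Hc) (fun c _ => Hg1 c).
    have : g1 c <= 0 by have := Hg2 d; nra.
    nra.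
  - lra.
  - have [c [Ec Hc]] := MVT_cor2 g g1 0 u Hu (fun c _ => Hg c).
    have [d [Ed Hd]] := MVT_cor2 g1 g2 0 c (proj1 Hc) (fun c _ => Hg1 c).
    have : 0 <= g1 c by have := Hg2 d; nra.
    nra.
Qed.

Lemma bernoulli_mgf_pos p u : 0 <= p <= 1 -> 0 < 1 - p + p * exp u.
Proof.
  move=> Hp; have := exp_pos u.
  case: (Req_dec p 1) => [->|]; [lra | nra].
Qed.

(* Hoeffding's lemma for a Bernoulli(p) variable: log E e^{uB} <= pu + u^2/8.
   The gap g(u) = pu + u^2/8 - ln(1-p+pe^u) has g(0) = g'(0) = 0 and
   g''(u) = 1/4 - q(1-q) >= 0 with q = pe^u/(1-p+pe^u). *)
Lemma hoeffding_bernoulli p u : 0 <= p <= 1 ->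
  1 - p + p * exp u <= exp (p * u + u ^ 2 / 8).
Proof.
  move=> Hp.
  set D := fun u => 1 - p + p * exp u.
  have HD : forall u, 0 < D u by move=> v; exact: bernoulli_mgf_pos.
  set g := fun u => p * u + u ^ 2 / 8 - ln (D u).
  set g1 := fun u => p + u / 4 - p * exp u / D u.
  set g2 := fun u => 1 / 4 - p * exp u * (1 - p) / D u ^ 2.
  have Hg : forall c, derivable_pt_lim g c (g1 c).
    move=> c; apply is_derive_Reals; have := HD c.
    rewrite /g /g1 /D => ?; auto_derive; [lra | field; lra].
  have Hg1 : forall c, derivable_pt_lim g1 c (g2 c).
    move=> c; apply is_derive_Reals; have := HD c.
    rewrite /g1 /g2 /D => ?; auto_derive; [lra | field; lra].
  have Hg2 : forall c, 0 <= g2 c.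
    move=> c; have Dc := HD c; have := exp_pos c.
    have Hq : p * exp c * (1 - p) <= D c ^ 2 / 4.
      by rewrite /D; have := pow2_ge_0 (1 - p - p * exp c); nra.
    have : p * exp c * (1 - p) / D c ^ 2 <= 1 / 4.
      apply: (Rmult_le_reg_r (D c ^ 2)); first nra.
      by rewrite /Rdiv Rmult_assoc Rinv_l; [lra | apply: pow_nonzero; lra].
    rewrite /g2; lra.
  have g0 : g 0 = 0.
    rewrite /g /D exp_0 (_ : 1 - p + p * 1 = 1); last ring.
    by rewrite ln_1; field.
  have g10 : g1 0 = 0 by rewrite /g1 /D exp_0; field; lra.
  have := nonneg_of_convex_critical Hg Hg1 Hg2 g0 g10 u.
  rewrite /g -/(D u) => Hgap.
  rewrite -(exp_ln (D u) (HD u)); apply: exp_le; lra.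
Qed.

Lemma exp_chord {A B} s {y} : A <= y <= B ->
  exp (s * y) * (B - A) <= (B - y) * exp (s * A) + (y - A) * exp (s * B).
Proof.
  move=> Hy; set E := exp (s * y); have HE : 0 < E by apply: exp_pos.
  have tangent : forall z, E * (1 + (s * z - s * y)) <= exp (s * z).
    move=> z; have -> : exp (s * z) = E * exp (s * z - s * y).
      by rewrite /E -exp_plus; f_equal; ring.
    apply: Rmult_le_compat_l; [lra | exact: exp_ineq1_le].
  have hA := Rmult_le_compat_l (B - y) _ _ ltac:(lra) (tangent A).
  have hB := Rmult_le_compat_l (y - A) _ _ ltac:(lra) (tangent B).
  nra.
Qed.

(* Hoeffding's lemma for the two-point law on {A, B} with mean zero. *)
Lemma hoeffding_two_point A B s : A <= 0 <= B -> A < B ->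
  (B * exp (s * A) - A * exp (s * B)) / (B - A) <= exp (s ^ 2 * (B - A) ^ 2 / 8).
Proof.
  move=> HAB lAB; set p := - A / (B - A); set u := s * (B - A).
  have Hp : 0 <= p <= 1.
    rewrite /p; split.
    - by apply: Rmult_le_pos; [lra | left; apply: Rinv_0_lt_compat; lra].
    - apply: (Rmult_le_reg_r (B - A)); first lra.
      rewrite /Rdiv Rmult_assoc Rinv_l; lra.
  have -> : (B * exp (s * A) - A * exp (s * B)) / (B - A)
            = exp (s * A) * (1 - p + p * exp u).
    have -> : exp (s * B) = exp (s * A) * exp u.
      by rewrite -exp_plus /u; f_equal; ring.
    rewrite /p; field; lra.
  apply: (Rle_trans _ (exp (s * A) * exp (p * u + u ^ 2 / 8))).
    by apply: Rmult_le_compat_l; [left; apply: exp_pos | exact: hoeffding_bernoulli].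
  rewrite -exp_plus; apply: Req_le; f_equal; rewrite /p /u; field; lra.
Qed.

Lemma zero_sum_range {I : finType} {P : pred I} {y : I -> R} {A B i0} : P i0 ->
  (forall i, P i -> A <= y i <= B) -> \big[Rplus/0]_(i | P i) y i = 0 ->
  A <= 0 <= B.
Proof.
  move=> Pi0 H Hs; split; apply: Rnot_lt_le => hAB.
  - have : 0 < \big[Rplus/0]_(i | P i) y i.
      apply: (@sumR_gt0 I P _ i0 Pi0) => [i Pi|];
        [have := H _ Pi | have := H _ Pi0]; lra.
    lra.
  - have : 0 < \big[Rplus/0]_(i | P i) (- y i).
      apply: (@sumR_gt0 I P _ i0 Pi0) => [i Pi|];
        [have := H _ Pi | have := H _ Pi0]; lra.
    rewrite (eq_bigr (fun i => -1 * y i)) => [|i _]; last ring.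
    rewrite -sumR_mull; lra.
Qed.

(* Bound each exp(s y_i) by the chord, sum, and
   use that the chord evaluated at the mean 0 is the two-point case. *)
Lemma hoeffding_finite {I : finType} {P : pred I} {y : I -> R} {A B} (s : R) {i0} :
  P i0 -> (forall i, P i -> A <= y i <= B) -> \big[Rplus/0]_(i | P i) y i = 0 ->
  \big[Rplus/0]_(i | P i) exp (s * y i) <=
  (\big[Rplus/0]_(i | P i) 1) * exp (s ^ 2 * (B - A) ^ 2 / 8).
Proof.
  move=> Pi0 Hy Hs; have HAB := zero_sum_range Pi0 Hy Hs.
  have Hc : 0 <= \big[Rplus/0]_(i | P i) 1 by apply: sumR_ge0 => *; lra.
  case: (Req_dec A B) => [eAB|nAB].
    rewrite Rmult_comm sumR_mull; apply: sumR_le => i Pi.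
    have -> : y i = 0 by have := Hy _ Pi; lra.
    rewrite eAB Rminus_diag (_ : s ^ 2 * 0 ^ 2 / 8 = 0); last by field.
    rewrite Rmult_0_r exp_0; lra.
  set al := (B * exp (s * A) - A * exp (s * B)) / (B - A).
  set be := (exp (s * B) - exp (s * A)) / (B - A).
  apply: (Rle_trans _ (\big[Rplus/0]_(i | P i) (al * 1 + be * y i))).
    apply: sumR_le => i Pi; have h := exp_chord s (Hy _ Pi).
    apply: (Rmult_le_reg_r (B - A)); first lra.
    apply: (Rle_trans _ _ _ h); apply: Req_le; rewrite /al /be; field; lra.
  rewrite sumR_add -!sumR_mull Hs Rmult_0_r Rplus_0_r Rmult_comm.
  apply: Rmult_le_compat_l => //; apply: hoeffding_two_point; lra.
Qed.

Lemma sq_ratio_le_telescope {m k : R} : 1 <= m <= k ->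
  m ^ 2 / k ^ 2 <= m * (m + 1) * (1 / k - 1 / (k + 1)).
Proof.
  move=> Hmk.
  have -> : m * (m + 1) * (1 / k - 1 / (k + 1))
            = m ^ 2 / k ^ 2 + m * (k - m) / (k ^ 2 * (k + 1)) by field; lra.
  have : 0 <= m * (k - m) / (k ^ 2 * (k + 1)).
    by apply: Rmult_le_pos; [nra | left; apply: Rinv_0_lt_compat; nra].
  lra.
Qed.

Section PartialSums.
Variables (N : nat) (x : 'I_N -> R).

Definition psum (k : nat) (s : 'S_N) : R :=
  \big[Rplus/0]_(t < N | ltn t k) (x (s t) - pop_mean x).

Definition mgf_mean (n : nat) (lambda : R) (k : nat) : R :=
  \big[Rplus/0]_(s : 'S_N) exp (lambda * INR n / INR k * psum k s).

(* Composing s with the transposition of j < k+1 and the position k exchanges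
   the draws at j and k, so the first k draws are the first k+1 minus draw j. *)
Lemma psum_tperm (k : nat) (kk j : 'I_N) (s : 'S_N) :
  nat_of_ord kk = k -> ltn j k.+1 ->
  psum k (tperm j kk * s)%g = psum k.+1 s - (x (s j) - pop_mean x).
Proof.
  move=> ekk hj; rewrite /psum.
  under eq_bigr => t _ do rewrite permM.
  rewrite (reindex_inj (inv_inj (tpermK j kk))) /=.
  under eq_bigr => t _ do rewrite tpermK.
  rewrite [X in _ = X - _](bigD1 j) //= [X in _ = X - _]Rplus_comm.
  rewrite (eq_bigl (fun t : 'I_N => ltn t k.+1 && (t != j))).
    by rewrite /Rminus Rplus_assoc Rplus_opp_r Rplus_0_r.
  move=> t /=; case: tpermP => [->|->|ne1 ne2].
  - by rewrite ekk ltnn; case: eqP => // _; rewrite andbF.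
  - case: (eqVneq j kk) => [->|njk]; first by rewrite ekk ltnn andbF.
    have hjk : nat_of_ord j != k by rewrite -ekk.
    by rewrite ekk ltnSn /= ltn_neqAle hjk -ltnS.
  - have htk : nat_of_ord t != k.
      by rewrite -ekk; apply/eqP => h; apply: ne2; exact: val_inj.
    have -> : t != j by apply/eqP.
    by rewrite andbT ltnS ltn_neqAle htk.
Qed.

(* All N draws exhaust the population, so the centred sum vanishes. *)
Lemma psum_full (s : 'S_N) : 0 < INR N -> psum N s = 0.
Proof.
  move=> HN; rewrite /psum (eq_bigl (fun _ => true)) => [|t]; last exact: ltn_ord.
  rewrite /Rminus sumR_add sumR_const card_ord.
  rewrite (reindex_inj (@perm_inj _ (s^-1)%g)) /=.
  rewrite (eq_bigr x) => [|j _]; last by rewrite permKV.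
  (* naming the total identifies its two occurrences, equal up to conversion *)
  by rewrite /pop_mean; set S := \big[Rplus/0]_(i < N) x i; field; lra.
Qed.

Lemma mgf_mean_full (n : nat) (lambda : R) : (0 < N)%coq_nat ->
  mgf_mean n lambda N = INR #|{perm 'I_N}|.
Proof.
  move=> hN; have HN : 0 < INR N by apply: lt_0_INR.
  rewrite /mgf_mean (eq_bigr (fun _ => 1)) => [|s _].
    by rewrite sumR_const Rmult_1_r.
  by rewrite psum_full // Rmult_0_r exp_0.
Qed.

Variables (n : nat) (a b lambda : R).
Hypothesis hx : forall i, a <= x i <= b.

(* For a fixed s, average over the removed draw j < k+1: the increments
   y_j = S_k/k - S_{k+1}/(k+1) after removal sum to zero and lie in an
   interval of length (b-a)/k, so Hoeffding's lemma applies. *)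
Lemma remove_one_draw (k : nat) (kk : 'I_N) (s : 'S_N) :
  nat_of_ord kk = k -> (0 < k)%coq_nat ->
  \big[Rplus/0]_(j < N | ltn j k.+1)
     exp (lambda * INR n / INR k * psum k (tperm j kk * s)%g)
  <= INR k.+1 * (exp (lambda * INR n / INR k.+1 * psum k.+1 s)
                 * exp (lambda ^ 2 * (b - a) ^ 2 / 8 * (INR n ^ 2 / INR k ^ 2))).
Proof.
  move=> ekk hk; have Hk : 0 < INR k by apply: lt_0_INR.
  have hkN : leq k.+1 N by rewrite -ekk ltn_ord.
  have Hk1 : INR k.+1 = INR k + 1 by rewrite S_INR.
  set mu := pop_mean x; set S' := psum k.+1 s.
  set C := S' / INR k - S' / INR k.+1.
  set y := fun j : 'I_N => C - (x (s j) - mu) / INR k.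
  rewrite (eq_bigr (fun j => exp (lambda * INR n / INR k.+1 * S')
                             * exp ((lambda * INR n) * y j))); last first.
    move=> j hj; rewrite psum_tperm // -exp_plus /y /C /S'.
    by f_equal; rewrite -/mu Hk1; field; lra.
  rewrite -sumR_mull.
  have Hsy : \big[Rplus/0]_(j < N | ltn j k.+1) y j = 0.
    rewrite (eq_bigr (fun j => C + (- / INR k) * (x (s j) - mu))) => [|j _]; last first.
      by rewrite /y; field; lra.
    rewrite sumR_add sumR_const_prefix // -sumR_mull.
    have -> : \big[Rplus/0]_(j < N | ltn j k.+1) (x (s j) - mu) = S' by [].
    rewrite /C Hk1; field; lra.
  have Hyb : forall j : 'I_N, ltn j k.+1 ->
      C - (b - mu) / INR k <= y j <= C - (a - mu) / INR k.
    move=> j _; have := hx (s j) => hxj; rewrite /y; split;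
      apply: Rplus_le_compat_l; apply: Ropp_le_contravar; apply: Rmult_le_compat_r;
      try (left; apply: Rinv_0_lt_compat); lra.
  have hkk : ltn kk k.+1 by rewrite ekk; exact: ltnSn.
  have := hoeffding_finite (lambda * INR n) hkk Hyb Hsy.
  rewrite sumR_const_prefix // Rmult_1_r.
  have -> : (lambda * INR n) ^ 2
              * (C - (a - mu) / INR k - (C - (b - mu) / INR k)) ^ 2 / 8
            = lambda ^ 2 * (b - a) ^ 2 / 8 * (INR n ^ 2 / INR k ^ 2).
    by field; lra.
  move=> Hhoef; rewrite -Rmult_assoc (Rmult_comm (INR k.+1)) Rmult_assoc.
  by apply: Rmult_le_compat_l; [left; exact: exp_pos | exact: Hhoef].
Qed.

(* One step of the reverse martingale: removing a uniform draw among the first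
   k+1 of a uniform permutation yields the first k draws of a uniform
   permutation, hence M_k <= M_{k+1} * exp(lambda^2 (b-a)^2/8 * n^2/k^2). *)
Lemma mgf_mean_step (k : nat) : leq 1 k -> ltn k N ->
  mgf_mean n lambda k <= mgf_mean n lambda k.+1
    * exp (lambda ^ 2 * (b - a) ^ 2 / 8 * (INR n ^ 2 / INR k ^ 2)).
Proof.
  move=> hk hkN; set kk := Ordinal hkN.
  have Hk1 : 0 < INR k.+1 by apply: lt_0_INR; lia.
  have reindex : forall j : 'I_N, mgf_mean n lambda k =
      \big[Rplus/0]_(s : 'S_N) exp (lambda * INR n / INR k * psum k (tperm j kk * s)%g).
    by move=> j; rewrite /mgf_mean (reindex_inj (mulgI (tperm j kk))).
  apply: (Rmult_le_reg_l (INR k.+1)) => //.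
  rewrite -[X in X <= _](@sumR_const_prefix N k.+1 _ hkN).
  rewrite (eq_bigr _ (fun j _ => reindex j)) exchange_big.
  apply: (Rle_trans _ (\big[Rplus/0]_(s : 'S_N) (INR k.+1 *
      (exp (lambda * INR n / INR k.+1 * psum k.+1 s)
       * exp (lambda ^ 2 * (b - a) ^ 2 / 8 * (INR n ^ 2 / INR k ^ 2)))))).
    by apply: sumR_le => s _; apply: remove_one_draw => //; lia.
  apply: Req_le; rewrite -sumR_mull; f_equal.
  by rewrite /mgf_mean [RHS]Rmult_comm sumR_mull; apply: eq_bigr => s _; ring.
Qed.

Lemma mgf_mean_bound : leq 1 n -> leq n N -> forall d, leq d (subn N n) ->
  mgf_mean n lambda (subn N d) <= INR #|{perm 'I_N}| *
    exp (lambda ^ 2 * (b - a) ^ 2 / 8 * (INR n * (INR n + 1))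
         * (1 / INR (subn N d) - 1 / INR N)).
Proof.
  move=> hn hnN; elim=> [|d IH] hd.
    rewrite subn0 mgf_mean_full; last by apply/ltP; lia.
    by rewrite Rminus_diag Rmult_0_r exp_0; lra.
  set k := subn N d.+1; set c := lambda ^ 2 * (b - a) ^ 2 / 8.
  have ek : subn N d = k.+1 by rewrite /k; lia.
  have hnk : leq n k by rewrite /k; lia.
  have hc : 0 <= c.
    by rewrite /c; have := pow2_ge_0 lambda; have := pow2_ge_0 (b - a); nra.
  have hnn : 1 <= INR n by apply: (le_INR 1); apply/leP.
  have hkn : INR n <= INR k by apply: le_INR; apply/leP.
  have hNp : 0 < INR N by apply: lt_0_INR; apply/ltP; lia.
  have := IH (ltnW hd); rewrite ek S_INR => IH'.
  have hk1 : leq 1 k by lia.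
  have hkN : ltn k N by rewrite /ltn /=; lia.
  apply: (Rle_trans _ _ _ (mgf_mean_step k hk1 hkN)); rewrite -/c.
  apply: (Rle_trans _ (INR #|{perm 'I_N}|
      * exp (c * (INR n * (INR n + 1)) * (1 / (INR k + 1) - 1 / INR N))
      * exp (c * (INR n ^ 2 / INR k ^ 2)))).
    by apply: Rmult_le_compat_r; [left; exact: exp_pos | exact: IH'].
  rewrite Rmult_assoc -exp_plus.
  apply: Rmult_le_compat_l; first exact: pos_INR.
  apply: exp_le.
  have := Rmult_le_compat_l c _ _ hc (sq_ratio_le_telescope (conj hnn hkn)).
  have -> : c * (INR n * (INR n + 1)) * (1 / INR k - 1 / INR N) =
      c * (INR n * (INR n + 1)) * (1 / (INR k + 1) - 1 / INR N) +
      c * (INR n * (INR n + 1) * (1 / INR k - 1 / (INR k + 1))).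
    by field; lra.
  lra.
Qed.

End PartialSums.

Lemma Eperm_exp_nZ (N n : nat) (x : 'I_N -> R) (lambda : R) : 0 < INR n ->
  Eperm (fun s : 'S_N => exp (lambda * nZ n x s))
  = mgf_mean N x n lambda n / INR #|{perm 'I_N}|.
Proof.
  move=> hnp; rewrite /Eperm /mgf_mean; f_equal; apply: eq_bigr => s _; f_equal.
  by rewrite /nZ /psum; field; lra.
Qed.

Theorem proposition4 (N n : nat) (hN : leq 2 N)
  (hn1 : leq 1 n) (hn2 : leq n (subn N 1))
  (x : 'I_N -> R) (a b : R)
  (ha : forall i, a <= x i) (ha' : exists i, x i = a)
  (hb : forall i, x i <= b) (hb' : exists i, x i = b)
  (lambda : R) (hl : 0 < lambda) :
  ln (Eperm (fun s : 'S_N => exp (lambda * nZ n x s)))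
  <= (b - a) ^ 2 / 8 * lambda ^ 2 * INR (addn n 1) * (1 - INR n / INR N).
Proof.
  have hx : forall i, a <= x i <= b by move=> i; split.
  have hnN : leq n N by lia.
  have hnp : 0 < INR n by apply: lt_0_INR; apply/ltP.
  have hNp : 0 < INR N by apply: lt_0_INR; apply/ltP; lia.
  have hcard : 0 < INR #|{perm 'I_N}|.
    by apply: lt_0_INR; apply/ltP; rewrite card_Sn; exact: fact_gt0.
  have hM : 0 < mgf_mean N x n lambda n.
    by apply: (@sumR_gt0 _ predT _ 1%g) => // [s _|]; [left|]; exact: exp_pos.
  have := @mgf_mean_bound N x n a b lambda hx hn1 hnN (subn N n) (leqnn _).
  rewrite subKn // Eperm_exp_nZ //.
  set T := lambda ^ 2 * (b - a) ^ 2 / 8 * (INR n * (INR n + 1))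
           * (1 / INR n - 1 / INR N) => HT.
  have -> : (b - a) ^ 2 / 8 * lambda ^ 2 * INR (addn n 1) * (1 - INR n / INR N) = T.
    by rewrite addn1 S_INR /T; field; lra.
  rewrite -(ln_exp T); apply: ln_le; first exact: Rdiv_lt_0_compat.
  apply: (Rmult_le_reg_r (INR #|{perm 'I_N}|)) => //.
  rewrite /Rdiv Rmult_assoc Rinv_l; last lra.
  by rewrite Rmult_1_r Rmult_comm.
Qed.
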